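(* Every affine bijection $\sigma:\mathcal{G}_N\to\mathcal{G}_N$ maps the set $\mathcal{I}$ of Ising matrices onto $\mathcal{I}$.
   Context: $\mathcal{G}_N$ is the set of real symmetric positive semi-definite $N\times N$ matrices with unit diagonal; $\mathcal{I}\subseteq\mathcal{G}_N$ is the set of its rank-one elements, i.e. the matrices $\mathbf{s}\mathbf{s}^\top$ with $\mathbf{s}\in\{\pm1\}^N$. *)

From HB Require Import structures.
From mathcomp Require Import all_boot all_order all_algebra.
From mathcomp Require Import reals.
Set Implicit Arguments. Unset Strict Implicit. Unset Printing Implicit Defensive.
Import Order.TTheory GRing.Theory Num.Theory.
Local Open Scope ring_scope.

Section Defs.
Variables (R : realType) (N : nat).

Definition psd (A : 'M[R]_N) : Prop :=
  forall x : 'cV[R]_N, 0 <= (x^T *m A *m x) ord0 ord0.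

Definition elliptope (A : 'M[R]_N) : Prop :=
  A^T = A /\ psd A /\ (forall i : 'I_N, A i i = 1).

Definition ising (A : 'M[R]_N) : Prop :=
  exists s : 'cV[R]_N, (forall i : 'I_N, s i ord0 = 1 \/ s i ord0 = -1)
                       /\ A = s *m s^T.

Definition affine_bijection_elliptope (sigma : 'M[R]_N -> 'M[R]_N) : Prop :=
  (forall A, elliptope A -> elliptope (sigma A)) /\
  (forall A B, elliptope A -> elliptope B -> sigma A = sigma B -> A = B) /\
  (forall B, elliptope B -> exists2 A, elliptope A & sigma A = B) /\
  (forall A B (t : R), elliptope A -> elliptope B -> 0 <= t -> t <= 1 ->
     sigma (t *: A + (1 - t) *: B) = t *: sigma A + (1 - t) *: sigma B).

End Defs.

From mathcomp Require Import all_boot all_order all_algebra.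
From mathcomp Require Import reals.
From mathcomp Require Import ring lra.

Set Implicit Arguments. Unset Strict Implicit. Unset Printing Implicit Defensive.
Import Order.TTheory GRing.Theory Num.Theory.
Local Open Scope ring_scope.

(* An Ising matrix X = s s^T is a vertex of G_N in a strong sense: every M in
   G_N satisfies s_k s_l M_kl <= 1, with equality at X.  Hence if G_N contains,
   for every small e > 0, points X + b ((F1 - F2) + e (F1 + F2 - 2 X)) and
   X + b ((F2 - F1) + e (F1 + F2 - 2 X)) with F1, F2 in G_N, then F1 = F2
   ([tilt_rigid]).  A non-Ising Y in G_N has an entry |Y_ij| < 1; replacing the
   i-th vector of a Gram factorisation of Y by unit vectors in the span of the
   i-th and j-th ones gives an ellipse of matrices of G_N through Y on which
   such points exist for some F1 <> F2.  So the Ising matrices are exactly the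
   tilt-rigid points of G_N.  Tilt-rigidity only involves identities between
   balanced nonnegative combinations of points of G_N, which an affine
   bijection of G_N preserves in both directions. *)

Lemma balanced_combE (F : fieldType) (V : lmodType F) (A B C D : V) (p q r s : F) :
  p + q = r + s -> p + q != 0 ->
  p *: A + q *: B = r *: C + s *: D <->
  (p / (p + q)) *: A + (1 - p / (p + q)) *: B
    = (r / (p + q)) *: C + (1 - r / (p + q)) *: D.
Proof.
move=> pqrs n0.
have -> : 1 - p / (p + q) = q / (p + q) by field.
have -> : 1 - r / (p + q) = s / (p + q).
  by rewrite [s](_ : _ = p + q - r); [field | rewrite pqrs; ring].
have scale_div x (v : V) : (x / (p + q)) *: v = (p + q)^-1 *: (x *: v).
  by rewrite scalerA mulrC.
rewrite !scale_div -!scalerDr.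
by split=> [-> // | /scalerI]; apply; rewrite invr_eq0.
Qed.

Lemma normr_eq1_pm1 (R : realDomainType) (x : R) : `|x| = 1 -> x = 1 \/ x = -1.
Proof. by move/eqP; rewrite -sqr_norm_eq1 sqrf_eq1 => /orP[] /eqP; [left | right]. Qed.

Lemma eq0_of_norm_le_small (R : realFieldType) (x c : R) : 0 < c ->
  (forall e, 0 < e -> e <= 1 -> `|x| <= c * e) -> x = 0.
Proof.
move=> c0 small; have [// | x0] := eqVneq x 0; exfalso.
have nx : 0 < `|x| by rewrite normr_gt0.
have xc : 0 < `|x| + c by rewrite addr_gt0.
have := small (`|x| / (`|x| + c)).
rewrite divr_gt0 // ler_pdivrMr // mul1r lerDl (ltW c0) mulrA ler_pdivlMr //.
by move=> /(_ isT isT); nra.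
Qed.

Lemma tilt_scale (R : realFieldType) (r e : R) : -1 < r -> r < 1 -> 0 < e -> e <= 1 ->
  exists b, [/\ 0 < b, 2 * b * e <= 1 & b * (e * e * (1 - r) + 1 + r) = e].
Proof.
move=> r1 r2 e0 e1; set den := e * e * (1 - r) + 1 + r.
have den0 : 0 < den by rewrite /den; nra.
exists (e / den); rewrite divr_gt0 // divfK ?gt_eqF //; split=> //.
have -> : 2 * (e / den) * e = (2 * e * e) / den by ring.
have ee : 0 <= 1 - e * e by nra.
have r0 : 0 <= r + 1 by lra.
have := mulr_ge0 r0 ee.
rewrite ler_pdivrMr // mul1r /den; nra.
Qed.

Section Elliptope.
Variables (R : realType) (N : nat).
Implicit Types (X Y A B D F M : 'M[R]_N) (u v : 'cV[R]_N).

Definition bform M u v : R := (u^T *m M *m v) ord0 ord0.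

Lemma bformDl M u1 u2 v : bform M (u1 + u2) v = bform M u1 v + bform M u2 v.
Proof. by rewrite /bform linearD /= !mulmxDl mxE. Qed.

Lemma bformDr M u v1 v2 : bform M u (v1 + v2) = bform M u v1 + bform M u v2.
Proof. by rewrite /bform !mulmxDr mxE. Qed.

Lemma bformZl M c u v : bform M (c *: u) v = c * bform M u v.
Proof. by rewrite /bform linearZ /= -!scalemxAl mxE. Qed.

Lemma bformZr M c u v : bform M u (c *: v) = c * bform M u v.
Proof. by rewrite /bform -!scalemxAr mxE. Qed.

Lemma bform_delta M k l : bform M (delta_mx k 0) (delta_mx l 0) = M k l.
Proof. by rewrite /bform trmx_delta -rowE -colE !mxE. Qed.

Definition bformE := (bformDl, bformDr, bformZl, bformZr, bform_delta).

Lemma elliptope_sym_entry M k l : elliptope M -> M l k = M k l.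
Proof. by case=> Msym _; rewrite -{1}Msym mxE. Qed.

Lemma elliptope_entry_le1 M k l : elliptope M -> `|M k l| <= 1.
Proof.
move=> MG; have [_ [Mpsd Mdiag]] := MG.
have form_ge0 c : 0 <= 1 + 2 * c * M k l + c * c.
  have := Mpsd (delta_mx k 0 + c *: delta_mx l 0).
  rewrite -/(bform _ _ _) !bformE !Mdiag (elliptope_sym_entry k l MG).
  by move=> ?; lra.
rewrite ler_norml; have := form_ge0 1; have := form_ge0 (-1).
by move=> ? ?; apply/andP; split; lra.
Qed.

Lemma psd_congr Y M : psd Y -> psd (M^T *m Y *m M).
Proof. by move=> Ypsd x; have := Ypsd (M *m x); rewrite trmx_mul !mulmxA. Qed.

Lemma elliptope_convex A B t : elliptope A -> elliptope B -> 0 <= t -> t <= 1 ->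
  elliptope (t *: A + (1 - t) *: B).
Proof.
move=> [Asym [Apsd Adiag]] [Bsym [Bpsd Bdiag]] t0 t1; split; [|split].
- by rewrite linearD /= !linearZ /= Asym Bsym.
- move=> x; rewrite -/(bform _ _ _).
  have -> : bform (t *: A + (1 - t) *: B) x x = t * bform A x x + (1 - t) * bform B x x.
    by rewrite /bform mulmxDr mulmxDl -!scalemxAr -!scalemxAl !mxE.
  by apply: addr_ge0; apply: mulr_ge0; rewrite ?subr_ge0 //; [apply: Apsd | apply: Bpsd].
- by move=> i; rewrite !mxE Adiag Bdiag; ring.
Qed.

Lemma ising_elliptope X : ising X -> elliptope X.
Proof.
case=> s [s_pm ->]; split; [|split].
- by rewrite trmx_mul trmxK.
- move=> x; rewrite !mulmxA -mulmxA -[x^T *m s]trmxK trmx_mul trmxK.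
  by rewrite mxE big_ord1 mxE sqr_ge0.
- by move=> i; rewrite mxE big_ord1 mxE; case: (s_pm i) => ->; ring.
Qed.

Lemma ising_of_unit_entries Y : elliptope Y -> (forall k l, `|Y k l| = 1) -> ising Y.
Proof.
move=> YG Yunit; have [_ [Ypsd Ydiag]] := YG.
have Ypm k l := normr_eq1_pm1 (Yunit k l).
have [i0 _ | N0] := pickP (@predT 'I_N); last first.
  by exists 0; split=> [k | ]; [have := N0 k | apply/matrixP => k; have := N0 k].
exists (col i0 Y); split=> [k | ]; first by rewrite mxE; exact: Ypm.
apply/matrixP=> k l; rewrite mxE big_ord1 !mxE.
(* On this vector the form is 2 Y_kl Y_ki0 Y_li0 - 1, forcing Y_kl = Y_ki0 Y_li0. *)
have := Ypsd (Y k i0 *: delta_mx k 0 + Y l i0 *: delta_mx l 0 + (-1) *: delta_mx i0 0).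
rewrite -/(bform _ _ _) !bformE !Ydiag (elliptope_sym_entry k l YG).
rewrite (elliptope_sym_entry k i0 YG) (elliptope_sym_entry l i0 YG).
by case: (Ypm k i0) => ->; case: (Ypm l i0) => ->; case: (Ypm k l) => ->; lra.
Qed.

Lemma ising_or_entry_lt1 Y : elliptope Y -> ising Y \/ exists i j, `|Y i j| < 1.
Proof.
move=> YG; have [/existsP[i /existsP[j Yij]] | /existsPn Yunit] :=
  boolP [exists i, exists j, `|Y i j| < 1]; first by right; exists i, j.
left; apply: ising_of_unit_entries => // k l.
have /existsPn/(_ l) := Yunit k; rewrite -leNgt => Ykl.
by apply/eqP; rewrite eq_le Ykl elliptope_entry_le1.
Qed.

Lemma sum_mul_indicator (f : 'I_N -> R) c : \sum_b f b * (b == c)%:R = f c.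
Proof.
by rewrite (bigD1 c) //= eqxx mulr1 big1 ?addr0 // => b /negbTE ->; rewrite mulr0.
Qed.

Section Perturbation.
Variables (Y : 'M[R]_N) (i j : 'I_N).

Definition cross_mx m : 'M[R]_N := \matrix_(k, l)
  if k == i then (if l == i then 0 else Y m l) else if l == i then Y k m else 0.

(* The Gram matrix of a factorisation of Y in which the i-th vector v_i is
   replaced by al v_i + be v_j ([perturbE]); it is affine in (al, be). *)
Definition perturb al be : 'M[R]_N := Y + (al - 1) *: cross_mx i + be *: cross_mx j.

Definition perturb_factor al be : 'M[R]_N := \matrix_(a < N, b < N)
  if b == i then al * (a == i)%:R + be * (a == j)%:R else (a == b)%:R.

Lemma mulmx_perturb_factor m (Z : 'M[R]_(m, N)) al be a l :
  (Z *m perturb_factor al be) a l = if l == i then al * Z a i + be * Z a j else Z a l.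
Proof.
rewrite mxE; under eq_bigr do rewrite mxE; case: eqVneq => _.
- under eq_bigr do rewrite mulrDr !mulrA.
  by rewrite big_split /= !sum_mul_indicator ![_ * al]mulrC ![_ * be]mulrC.
- exact: sum_mul_indicator.
Qed.

Lemma trmx_perturb_factor_mul m (Z : 'M[R]_(N, m)) al be k l :
  ((perturb_factor al be)^T *m Z) k l = if k == i then al * Z i l + be * Z j l else Z k l.
Proof. by rewrite -[Z]trmxK -trmx_mul mxE mulmx_perturb_factor !mxE. Qed.

Hypothesis YG : elliptope Y.

Lemma perturbE al be : al * al + 2 * al * be * Y i j + be * be = 1 ->
  perturb al be = (perturb_factor al be)^T *m Y *m perturb_factor al be.
Proof.
move=> unit; have [_ [_ Ydiag]] := YG.
apply/matrixP => k l; rewrite -mulmxA trmx_perturb_factor_mul !mulmx_perturb_factor.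
rewrite /perturb !mxE.
case: (eqVneq k i) => [-> | _]; case: (eqVneq l i) => [-> | _] /=; try ring.
by rewrite !Ydiag (elliptope_sym_entry i j YG); lra.
Qed.

Lemma perturb_elliptope al be : al * al + 2 * al * be * Y i j + be * be = 1 ->
  elliptope (perturb al be).
Proof.
move=> unit; have [Ysym [Ypsd Ydiag]] := YG; rewrite perturbE //; split; [|split].
- by rewrite !trmx_mul trmxK Ysym mulmxA.
- exact: psd_congr.
- by move=> k; rewrite -perturbE // !mxE Ydiag; case: (k == i); ring.
Qed.

Lemma perturb_entry al be : i != j -> perturb al be i j = al * Y i j + be.
Proof.
move=> ij; have [_ [_ Ydiag]] := YG.
by rewrite !mxE eqxx eq_sym (negbTE ij) Ydiag; ring.
Qed.

End Perturbation.

Lemma perturb_affine Y i j q r s a1 b1 a2 b2 a3 b3 :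
  1 + q = r + s -> a1 + q * a2 = r + s * a3 -> b1 + q * b2 = s * b3 ->
  perturb Y i j a1 b1 + q *: perturb Y i j a2 b2 = r *: Y + s *: perturb Y i j a3 b3.
Proof.
move=> coef ha hb; apply/matrixP => k l; rewrite !mxE.
rewrite (_ : a1 = r + s * a3 - q * a2); last by rewrite -ha; ring.
rewrite (_ : b1 = s * b3 - q * b2); last by rewrite -hb; ring.
rewrite (_ : r = 1 + q - s); last by rewrite coef; ring.
ring.
Qed.

(* D = X + b ((F1 - F2) + e (F1 + F2 - 2 X)), written as a balanced
   combination so that it is preserved by affine bijections of G_N. *)
Definition tilt_in_elliptope X F1 F2 (b e : R) : Prop := exists2 D, elliptope D &
  D + (b * (1 - e)) *: F2 = (1 - 2 * b * e) *: X + (b * (1 + e)) *: F1.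

Definition tilts X F1 F2 : Prop := forall e : R, 0 < e -> e <= 1 -> exists b : R,
  [/\ 0 < b, 2 * b * e <= 1, tilt_in_elliptope X F1 F2 b e
     & tilt_in_elliptope X F2 F1 b e].

Definition tilt_rigid X : Prop :=
  forall F1 F2, elliptope F1 -> elliptope F2 -> tilts X F1 F2 -> F1 = F2.

Lemma tilts_of_entry_lt1 Y i j : elliptope Y -> `|Y i j| < 1 ->
  exists E1 E2, [/\ elliptope E1, elliptope E2, E1 <> E2 & tilts Y E1 E2].
Proof.
move=> YG Yij; have [_ [_ Ydiag]] := YG.
set r := Y i j in Yij *.
have [r1 r2] : -1 < r /\ r < 1 by move: Yij; rewrite ltr_norml => /andP[].
have ij : i != j by apply: contraTneq Yij => eij; rewrite /r eij Ydiag normr1 ltxx.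
exists (perturb Y i j 0 1), (perturb Y i j (2 * r) (-1)); split.
- by apply: perturb_elliptope => //; ring.
- by apply: perturb_elliptope => //; rewrite -/r; ring.
- by move/(congr1 (fun M => M i j)); rewrite !perturb_entry // -/r => ?; nra.
(* In the coordinates (al, be) of [perturb], Y, E1 and E2 are (1, 0), (0, 1)
   and (2 r, -1); [tilt_scale] puts the two tilted points on the ellipse. *)
move=> e e0 e1; have [b [b0 be bden]] := tilt_scale r1 r2 e0 e1.
have on_ellipse (q : R) :
    q = 1 + 4 * b * (1 - r) * (b * (e * e * (1 - r) + 1 + r) - e) -> q = 1.
  by move=> ->; rewrite bden subrr mulr0 addr0.
exists b; split=> //.
- exists (perturb Y i j (1 - 2 * b * (r + e * (1 - r))) (2 * b)).
    by apply: perturb_elliptope => //; apply: on_ellipse; rewrite -/r; ring.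
  by apply: perturb_affine; ring.
- exists (perturb Y i j (1 + 2 * b * (r - e * (1 - r))) (- (2 * b))).
    by apply: perturb_elliptope => //; apply: on_ellipse; rewrite -/r; ring.
  by apply: perturb_affine; ring.
Qed.

Lemma tilt_unit_entry X F1 F2 b e k l : `|X k l| = 1 -> 0 < b -> 0 <= e ->
  elliptope F1 -> elliptope F2 -> tilt_in_elliptope X F1 F2 b e ->
  X k l * (F1 k l - F2 k l) <= 4 * e.
Proof.
move=> Xkl b0 e0 F1G F2G [D DG DE].
have := congr1 (fun M => M k l) DE; rewrite !mxE.
set c := X k l in Xkl *; set f1 := F1 k l; set f2 := F2 k l => Ekl.
have c2 : c * c = 1 by case: (normr_eq1_pm1 Xkl) => ->; ring.
have unit_bound M : elliptope M -> -1 <= c * M k l <= 1.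
  by move=> MG; rewrite -ler_norml normrM Xkl mul1r elliptope_entry_le1.
have /andP[_ cD] := unit_bound D DG.
have /andP[cf1 _] := unit_bound F1 F1G; have /andP[cf2 _] := unit_bound F2 F2G.
rewrite -/f1 -/f2 in cf1 cf2.
have : b * (c * (f1 - f2) + e * (c * f1 + c * f2) - 2 * e) <= 0.
  have -> : b * (c * (f1 - f2) + e * (c * f1 + c * f2) - 2 * e) = c * D k l - 1.
    apply/eqP; rewrite -subr_eq0; apply/eqP.
    transitivity ((1 - 2 * b * e) * (1 - c * c)); last by rewrite c2 subrr mulr0.
    rewrite (_ : D k l = (1 - 2 * b * e) * c + b * (1 + e) * f1 - b * (1 - e) * f2).
      by ring.
    by rewrite -Ekl; ring.
  by rewrite subr_le0.
rewrite pmulr_rle0 // => key.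
have f12 : 0 <= c * f1 + c * f2 + 2 by lra.
have := mulr_ge0 e0 f12; lra.
Qed.

Lemma ising_tilt_rigid X : ising X -> tilt_rigid X.
Proof.
move=> [s [s_pm ->]] F1 F2 F1G F2G tl; apply/matrixP => k l.
have unit : `|(s *m s^T) k l| = 1.
  rewrite mxE big_ord1 !mxE normrM.
  by case: (s_pm k) => ->; case: (s_pm l) => ->; rewrite ?normrN normr1 mulr1.
apply/eqP; rewrite -subr_eq0; apply/eqP/(@eq0_of_norm_le_small _ _ 4) => // e e0 e1.
have [b [b0 _ t12 t21]] := tl e e0 e1.
have := tilt_unit_entry unit b0 (ltW e0) F1G F2G t12.
have := tilt_unit_entry unit b0 (ltW e0) F2G F1G t21.
rewrite -[`|_ - _|]mul1r -unit -normrM ler_norml; lra.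
Qed.

Lemma ising_iff_tilt_rigid Y : elliptope Y -> ising Y <-> tilt_rigid Y.
Proof.
move=> YG; split; first exact: ising_tilt_rigid.
move=> Yrigid; have [// | [i [j Yij]]] := ising_or_entry_lt1 YG.
have [E1 [E2 [E1G E2G E12 tl]]] := tilts_of_entry_lt1 YG Yij.
by case: E12; apply: Yrigid.
Qed.

Section AffineBijection.
Variable sigma : 'M[R]_N -> 'M[R]_N.
Hypothesis sigmaA : affine_bijection_elliptope sigma.

Lemma affine_bijection_balanced A B C D p q r s :
  elliptope A -> elliptope B -> elliptope C -> elliptope D ->
  0 <= p -> 0 <= q -> 0 <= r -> 0 <= s -> p + q = r + s -> 0 < p + q ->
  p *: sigma A + q *: sigma B = r *: sigma C + s *: sigma D <->
  p *: A + q *: B = r *: C + s *: D.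
Proof.
move=> AG BG CG DG p0 q0 r0 s0 pqrs n0; have [_ [inj [_ aff]]] := sigmaA.
have n0' : p + q != 0 by rewrite gt_eqF.
have t0 : 0 <= p / (p + q) by rewrite divr_ge0 // ltW.
have t1 : p / (p + q) <= 1 by rewrite ler_pdivrMr // mul1r lerDl.
have u0 : 0 <= r / (p + q) by rewrite divr_ge0 // ltW.
have u1 : r / (p + q) <= 1 by rewrite ler_pdivrMr // mul1r pqrs lerDl.
split=> [/(balanced_combE _ _ _ _ pqrs n0') E | /(balanced_combE _ _ _ _ pqrs n0') E];
  apply/(balanced_combE _ _ _ _ pqrs n0').
- by apply: inj; rewrite ?aff //; apply: elliptope_convex.
- by rewrite -!aff // E.
Qed.

Lemma tilt_in_elliptope_sigma X F1 F2 b e :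
  elliptope X -> elliptope F1 -> elliptope F2 ->
  0 < b -> 0 <= e -> e <= 1 -> 2 * b * e <= 1 ->
  tilt_in_elliptope (sigma X) (sigma F1) (sigma F2) b e <-> tilt_in_elliptope X F1 F2 b e.
Proof.
move=> XG F1G F2G b0 e0 e1 be; have [maps [_ [onto _]]] := sigmaA.
have balanced D : elliptope D ->
    D + (b * (1 - e)) *: F2 = (1 - 2 * b * e) *: X + (b * (1 + e)) *: F1 <->
    sigma D + (b * (1 - e)) *: sigma F2
      = (1 - 2 * b * e) *: sigma X + (b * (1 + e)) *: sigma F1.
  move=> DG; have := @affine_bijection_balanced D F2 X F1
    1 (b * (1 - e)) (1 - 2 * b * e) (b * (1 + e)) DG F2G XG F1G.
  rewrite !scale1r => bal.
  by symmetry; apply: bal; try ring; rewrite ?subr_ge0; nra.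
split=> [[D' D'G E] | [D DG E]].
- by have [D DG eD] := onto _ D'G; exists D => //; apply/balanced; rewrite ?eD.
- by exists (sigma D); [exact: maps | apply/balanced].
Qed.

Lemma tilts_sigma X F1 F2 : elliptope X -> elliptope F1 -> elliptope F2 ->
  tilts (sigma X) (sigma F1) (sigma F2) <-> tilts X F1 F2.
Proof.
move=> XG F1G F2G; split=> tl e e0 e1; have [b [b0 be t12 t21]] := tl e e0 e1;
  exists b; split=> //; have e0' := ltW e0.
- by move/(tilt_in_elliptope_sigma XG F1G F2G b0 e0' e1 be): t12.
- by move/(tilt_in_elliptope_sigma XG F2G F1G b0 e0' e1 be): t21.
- by apply/(tilt_in_elliptope_sigma XG F1G F2G b0 e0' e1 be).
- by apply/(tilt_in_elliptope_sigma XG F2G F1G b0 e0' e1 be).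
Qed.

Lemma tilt_rigid_sigma A : elliptope A -> tilt_rigid (sigma A) <-> tilt_rigid A.
Proof.
have [maps [inj [onto _]]] := sigmaA; move=> AG.
split=> rigid F1 F2 F1G F2G tl.
- apply: inj => //; apply: rigid; try exact: maps.
  exact/(tilts_sigma AG F1G F2G).
- have [F1' F1'G eF1] := onto _ F1G; have [F2' F2'G eF2] := onto _ F2G.
  rewrite -eF1 -eF2 in tl *; rewrite (rigid F1' F2') //.
  exact/(tilts_sigma AG F1'G F2'G).
Qed.

End AffineBijection.
End Elliptope.

Theorem lemma5 (R : realType) (N : nat) (sigma : 'M[R]_N -> 'M[R]_N) :
  affine_bijection_elliptope sigma ->
  (forall A, ising A -> ising (sigma A)) /\
  (forall B, ising B -> exists2 A, ising A & sigma A = B).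
Proof.
move=> sigmaA; have [maps [_ [onto _]]] := sigmaA; split=> [A Aising | B Bising].
- have AG := ising_elliptope Aising.
  apply/(ising_iff_tilt_rigid (maps _ AG))/(tilt_rigid_sigma sigmaA AG).
  exact/(ising_iff_tilt_rigid AG).
- have [A AG eB] := onto _ (ising_elliptope Bising); exists A => //.
  apply/(ising_iff_tilt_rigid AG)/(tilt_rigid_sigma sigmaA AG).
  by rewrite eB; apply/(ising_iff_tilt_rigid (ising_elliptope Bising)).
Qed.
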